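(* Let $\rho$ be a measure on $(0,\infty)$ such that $\int_{(b,\infty)}s^{-1/2}\rho(\mathrm{d}s)<\infty$ for all $b>0$. Then $\mathfrak{A}(\rho)$ is definable.
   Context: A measure $\sigma$ on $(0,\infty)$ is locally finite on $(0,\infty)$ if $\sigma((b,c))<\infty$ whenever $0<b<c<\infty$. For a measure $\rho$ on $(0,\infty)$, $\mathfrak{A}(\rho)$ is said to be definable if the function $u\mapsto\int_{(u,\infty)}\pi^{-1/2}(s-u)^{-1/2}\rho(\mathrm{d}s)$ is the density (with respect to Lebesgue measure on $(0,\infty)$) of a locally finite measure on $(0,\infty)$; this measure is then denoted $\mathfrak{A}(\rho)(\mathrm{d}u)=\big(\int_{(u,\infty)}\pi^{-1/2}(s-u)^{-1/2}\rho(\mathrm{d}s)\big)\mathrm{d}u$. *)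

From HB Require Import structures.
From mathcomp Require Import all_boot all_order all_algebra.
From mathcomp Require Import all_classical all_reals all_analysis measurable_realfun.
Set Implicit Arguments. Unset Strict Implicit. Unset Printing Implicit Defensive.
Import Order.TTheory GRing.Theory Num.Theory.
Import numFieldNormedType.Exports.
Local Open Scope classical_set_scope.
Local Open Scope ring_scope.
Local Open Scope ereal_scope.

(* Measures on (0,oo) are represented by (Borel) measures on R; only their
   restriction to (0,oo) is ever used (all integrals are over subsets of (0,oo)). *)

Definition Adens (R : realType) (rho : {measure set R -> \bar R}) (u : R) : \bar R :=
  \int[rho]_(s in `]u, +oo[%classic) ((Num.sqrt pi)^-1 * (Num.sqrt (s - u))^-1)%:E.

(* A(rho) is definable: Adens rho is (measurable on (0,oo), hence) the density
   w.r.t. Lebesgue measure of a measure on (0,oo), and that measure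
   E |-> \int_E Adens rho is locally finite on (0,oo). *)
Definition A_definable (R : realType) (rho : {measure set R -> \bar R}) : Prop :=
  measurable_fun `](0%R : R), +oo[%classic (Adens rho) /\
  (forall b c : R, (0 < b)%R -> (b < c)%R ->
     \int[lebesgue_measure]_(u in `]b, c[%classic) Adens rho u < +oo).

From HB Require Import structures.
From mathcomp Require Import all_boot all_order all_algebra.
From mathcomp Require Import all_classical all_reals all_analysis measurable_realfun.
From mathcomp Require Import ring lra.
Import Order.TTheory GRing.Theory Num.Theory.
Import numFieldNormedType.Exports.
Local Open Scope classical_set_scope.
Local Open Scope ring_scope.
Local Open Scope ereal_scope.

(* Write A(rho)(u) = \int rho(ds) k(s - u) with k(x) = pi^(-1/2) x^(-1/2) for
   x > 0 and k = 0 elsewhere.  On (0, +oo) the measure rho is sigma-finite,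
   since rho(]b, N]) <= sqrt N \int_(]b, +oo[) s^(-1/2) rho(ds) < +oo, so
   Tonelli's theorem applies to (u, s) |-> k(s - u): it gives measurability of
   A(rho), and for 0 < b < c it exchanges the integrals in \int_b^c A(rho).
   The inner integral \int_b^c k(s - u) du vanishes for s <= b and is at most
   4c / sqrt s for s > b: for s <= 2c bound it by the integral of the
   singularity over ]s - 2c, s[, which is 2 sqrt(2c); for s > 2c use
   s - u >= s/4 on ]b, c[.  Hence \int_b^c A(rho) <= 4c \int_(]b, +oo[)
   s^(-1/2) rho(ds) < +oo. *)

Section inverse_sqrt.
Context {R : realType}.
Local Open Scope ring_scope.

Lemma measurable_invsqrt : measurable_fun setT (fun x : R => (Num.sqrt x)^-1).
Proof.
have -> : (fun x : R => (Num.sqrt x)^-1) = (fun y : R => powR y (-1)) \o Num.sqrt.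
  by apply/funext => x /=; rewrite powR_inv1.
apply: measurableT_comp; first exact: measurable_powR.
apply: continuous_measurable_fun; exact: sqrt_continuous.
Qed.

Lemma is_derive_sqrt_subr (s u : R) : u < s ->
  is_derive u 1 (fun v => -2 * Num.sqrt (s - v)) (Num.sqrt (s - u))^-1.
Proof.
move=> us; have su0 : 0 < s - u by rewrite subr_gt0.
have dsub : is_derive u 1 (fun v : R => s - v) (-1).
  by have := @is_deriveB R R R (cst s) id u 1 0 1; rewrite sub0r; apply.
have dsqrt : is_derive u 1 (Num.sqrt \o (fun v => s - v))
    (- (2 * Num.sqrt (s - u))^-1).
  apply: DeriveDef.
    by apply/derivable1_diffP/differentiable_comp;
      apply/derivable1_diffP; [case: dsub|case: (is_derive1_sqrt su0)].
  rewrite -derive1E derive1_comp; [|by case: dsub|by case: (is_derive1_sqrt su0)].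
  rewrite !derive1E (@derive_val _ _ _ _ _ _ _ dsub).
  rewrite (@derive_val _ _ _ _ _ _ _ (is_derive1_sqrt su0)).
  by rewrite mulrN1.
have -> : (Num.sqrt (s - u))^-1 = -2 *: - (2 * Num.sqrt (s - u))^-1.
  have : Num.sqrt (s - u) != 0 by rewrite gt_eqF// sqrtr_gt0.
  by move=> ?; rewrite /GRing.scale /=; field.
exact: is_deriveZ.
Qed.

Lemma continuous_invsqrt_subr (s x : R) : x < s ->
  {for x, continuous (fun u : R => (Num.sqrt (s - u))^-1)}.
Proof.
move=> xs; apply: continuousV; first by rewrite gt_eqF// sqrtr_gt0 subr_gt0.
apply: (@continuous_comp _ _ _ (fun u : R => s - u) Num.sqrt).
  by apply: continuousB => //; exact: cvg_cst.
exact: sqrt_continuous.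
Qed.

Lemma invsqrt_le2 (x y : R) : 0 < y -> y <= 4 * x ->
  (Num.sqrt x)^-1 <= 2 * (Num.sqrt y)^-1.
Proof.
move=> y0 yx; have x0 : 0 < x by lra.
have sqrt4 : Num.sqrt (4 : R) = 2.
  by rewrite (_ : 4 = 2 ^+ 2) ?sqrtr_sqr ?ger0_norm// expr2 -natrM.
have sy : Num.sqrt y <= 2 * Num.sqrt x.
  by rewrite -sqrt4 -sqrtrM ?ler0n// ler_sqrt//; lra.
by rewrite ler_pdivlMr ?sqrtr_gt0// mulrC ler_pdivrMr ?sqrtr_gt0.
Qed.

Lemma sqrt_le_div_sqrt (s L : R) : 0 < s -> s <= L -> Num.sqrt L <= L / Num.sqrt s.
Proof.
move=> s0 sL; have L0 : 0 < L := lt_le_trans s0 sL.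
rewrite ler_pdivlMr ?sqrtr_gt0// -{2}(sqr_sqrtr (ltW L0)) expr2.
by rewrite ler_pM2l ?sqrtr_gt0// ler_sqrt// ltW.
Qed.

End inverse_sqrt.

Section singular_integral.
Context {R : realType}.
Local Notation mu := (@lebesgue_measure R).

Lemma measurable_invsqrt_subr (s : R) :
  measurable_fun setT (fun u : R => ((Num.sqrt (s - u))^-1)%:E).
Proof.
apply/measurable_EFinP/(measurableT_comp measurable_invsqrt).
exact: measurable_funB.
Qed.

Lemma integral_invsqrt_subr_itv (s a b : R) : (a < b)%R -> (b < s)%R ->
  \int[mu]_(u in `[a, b]) ((Num.sqrt (s - u))^-1)%:E =
  (2 * Num.sqrt (s - a) - 2 * Num.sqrt (s - b))%:E.
Proof.
move=> ab bs.
have contF x : (x < s)%R ->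
    {for x, continuous (fun v : R => -2 * Num.sqrt (s - v))%R}.
  move=> xs; case: (is_derive_sqrt_subr _ _ xs).
  by move=> /derivable1_diffP/differentiable_continuous.
rewrite (_ : (_ - _)%R = -2 * Num.sqrt (s - b) - -2 * Num.sqrt (s - a))%R; last by ring.
apply: (@continuous_FTC2 R (fun u => (Num.sqrt (s - u))^-1)%R
  (fun v => -2 * Num.sqrt (s - v))%R _ _ ab).
- apply: continuous_in_subspaceT => x; rewrite inE/= in_itv/= => /andP[_ xb].
  by apply: continuous_invsqrt_subr; exact: le_lt_trans bs.
- split.
  + move=> x; rewrite in_itv/= => /andP[_ xb].
    by case: (is_derive_sqrt_subr _ _ (lt_trans xb bs)).
  + exact/cvg_at_right_filter/contF/(lt_trans ab).
  + exact/cvg_at_left_filter/contF.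
- move=> x; rewrite in_itv/= => /andP[_ xb].
  have := is_derive_sqrt_subr _ _ (lt_trans xb bs).
  by move=> dF; rewrite derive1E (@derive_val _ _ _ _ _ _ _ dF).
Qed.

Lemma integral_invsqrt_subr_le (s L : R) : (0 < L)%R ->
  \int[mu]_(u in `](s - L)%R, s[) ((Num.sqrt (s - u))^-1)%:E <= (2 * Num.sqrt L)%:E.
Proof.
(* Exhaust ]s - L, s[ by closed intervals avoiding the singularity at s, on
   which the FTC applies, and pass to the limit by monotone convergence. *)
move=> L0; pose B n := `[(s - L)%R, (s - L / n.+2%:R)%R]%classic.
have f_ge0 u : 0 <= ((Num.sqrt (s - u))^-1)%:E by rewrite lee_fin invr_ge0 sqrtr_ge0.
have cover : `](s - L)%R, s[%classic `<=` \bigcup_n B n.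
  move=> u /=; rewrite in_itv/= => /andP[Lu us].
  have su0 : (0 < s - u)%R by rewrite subr_gt0.
  have /archi_boundP := ltW (divr_gt0 L0 su0); set k := Num.Def.archi_bound _ => Lk.
  exists k => //=; rewrite /B/= in_itv/= (ltW Lu) lerBrDr -lerBrDl.
  rewrite ler_pdivrMr// -ler_pdivrMl// mulrC; apply/ltW/(lt_le_trans Lk).
  by rewrite ler_nat leqW.
have ndB : nondecreasing_seq B.
  apply/nondecreasing_seqP => n; rewrite subsetEset => x /=.
  rewrite /B/= !in_itv/= => /andP[-> xb]; apply: (le_trans xb).
  by rewrite lerD2l lerN2 ler_pM2l// lef_pV2 ?posrE// ler_nat.
have mB n : measurable (B n) by exact: measurable_itv.
have cvgB := ge0_nondecreasing_set_cvg_integral (mu := mu) ndB mB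
  (fun=> measurable_funTS (measurable_invsqrt_subr s)) (fun _ u _ => f_ge0 u).
apply: (@le_trans _ _ (\int[mu]_(u in \bigcup_n B n) ((Num.sqrt (s - u))^-1)%:E)).
  apply: ge0_subset_integral => //.
    by apply: bigcup_measurable => n _; exact: measurable_itv.
  apply: measurable_funTS; exact: measurable_invsqrt_subr.
rewrite -(cvg_lim _ cvgB)//; apply: lime_le; first by apply/cvg_ex; eexists; exact: cvgB.
apply: nearW => n; rewrite integral_invsqrt_subr_itv.
- rewrite lee_fin !subKr.
  by have := sqrtr_ge0 (L / n.+2%:R); lra.
- by rewrite ltrD2l ltrN2 ltr_pdivrMr// ltr_pMr// ltr1n.
- by rewrite ltrBlDr ltrDl divr_gt0.
Qed.

End singular_integral.

Section integral_lemmas.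
Context {d} {T : measurableType d} {R : realType} (mu : {measure set T -> \bar R}).

Lemma integral_eq_on_support (A B : set T) (f : T -> \bar R) :
  (forall x, f x != 0 -> A x <-> B x) ->
  \int[mu]_(x in A) f x = \int[mu]_(x in B) f x.
Proof.
move=> AB; rewrite [LHS]integral_mkcond [RHS]integral_mkcond.
apply: eq_integral => x _; rewrite /patch.
have [->|/AB [AxBx BxAx]] := eqVneq (f x) 0; first by do 2 case: ifP.
case: ifPn => [/set_mem/AxBx/mem_set -> //|xA]; case: ifPn => // /set_mem/BxAx.
by move/mem_set; rewrite (negbTE xA).
Qed.

Lemma integral_mrestr {D : set T} (mD : measurable D) (A : set T) (f : T -> \bar R) :
  A `<=` D -> \int[mrestr mu mD]_(x in A) f x = \int[mu]_(x in A) f x.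
Proof.
move=> AD; apply: eq_measure_integral => B mB BA /=.
by rewrite /mrestr setIidl//; exact: subset_trans AD.
Qed.

Lemma integral_indic_mul (A : set T) (f : T -> \bar R) :
  \int[mu]_x ((\1_A x)%:E * f x) = \int[mu]_(x in A) f x.
Proof.
rewrite [RHS]integral_mkcond; apply: eq_integral => x _.
by rewrite /patch indicE; case: ifP; rewrite ?mul1e ?mul0e.
Qed.

End integral_lemmas.

Section abel_kernel.
Context {R : realType}.
Local Notation mu := (@lebesgue_measure R).

(* Junk value: Num.sqrt x = 0 and 0^-1 = 0 for x <= 0, so the kernel vanishes
   there; this lets the integral over ]u, +oo[ defining Adens be taken over
   all of ]0, +oo[. *)
Definition abel_kernel (x : R) : \bar R := ((Num.sqrt pi)^-1 * (Num.sqrt x)^-1)%:E.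

Lemma abel_kernel_ge0 x : 0 <= abel_kernel x.
Proof. by rewrite lee_fin mulr_ge0// invr_ge0 sqrtr_ge0. Qed.

Lemma abel_kernel_le x : abel_kernel x <= ((Num.sqrt x)^-1)%:E.
Proof.
rewrite lee_fin ler_piMl ?invr_ge0 ?sqrtr_ge0// invf_le1 ?sqrtr_gt0 ?pi_gt0//.
rewrite -sqrtr1 ler_sqrt ?pi_ge0//; apply: le_trans (pi_ge2 R); exact: ler1n.
Qed.

Lemma abel_kernel_le0 x : (x <= 0)%R -> abel_kernel x = 0.
Proof. by move=> x0; rewrite /abel_kernel (ler0_sqrtr x0) invr0 mulr0. Qed.

Lemma abel_kernel_neq0 (x : R) : abel_kernel x != 0 -> (0 < x)%R.
Proof. by move=> k0; rewrite ltNge; apply: contra k0 => /abel_kernel_le0 ->. Qed.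

Lemma measurable_abel_kernel : measurable_fun setT abel_kernel.
Proof. by apply/measurable_EFinP/measurable_funM => //; exact: measurable_invsqrt. Qed.

Lemma measurable_abel_kernel_subr (s : R) :
  measurable_fun setT (fun u : R => abel_kernel (s - u)).
Proof. by apply: measurableT_comp measurable_abel_kernel _; exact: measurable_funB. Qed.

Lemma measurable_abel_kernel_diff :
  measurable_fun setT (fun z : R * R => abel_kernel (z.2 - z.1)).
Proof.
apply: measurableT_comp measurable_abel_kernel _.
by apply: measurable_funB; [exact: measurable_snd|exact: measurable_fst].
Qed.

Lemma integral_abel_kernel_itv_near (b c s : R) :
  (0 < b)%R -> (0 < s <= 2 * c)%R ->
  \int[mu]_(u in `]b, c[) abel_kernel (s - u) <= (4 * c / Num.sqrt s)%:E.
Proof.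
move=> b0 /andP[s0 sc]; pose h u := ((Num.sqrt (s - u))^-1)%:E.
have h_ge0 u : 0 <= h u by rewrite lee_fin invr_ge0 sqrtr_ge0.
have mh : measurable_fun setT h := measurable_invsqrt_subr s.
apply: (@le_trans _ _ (\int[mu]_(u in `]b, c[) h u)).
  apply: ge0_le_integral => //.
  - by move=> u _; exact: abel_kernel_ge0.
  - apply: measurable_funTS; exact: measurable_abel_kernel_subr.
  - exact: measurable_funTS.
  - by move=> u _; exact: abel_kernel_le.
apply: (@le_trans _ _ (\int[mu]_(u in `](s - 2 * c)%R, +oo[) h u)).
  apply: ge0_subset_integral => //; first exact: measurable_funTS.
  by move=> u /=; rewrite !in_itv/= !andbT => /andP[bu _]; apply: le_lt_trans bu; lra.
rewrite (@integral_eq_on_support _ _ _ mu _ `](s - 2 * c)%R, s[%classic); last first.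
  move=> u; rewrite /h /= !in_itv/= andbT; case: (ltP u s) => us; rewrite ?andbT//.
  by rewrite ler0_sqrtr ?subr_le0// invr0 eqxx.
apply: le_trans (integral_invsqrt_subr_le s (2 * c)%R _) _; first by lra.
rewrite lee_fin (_ : 4 * c = 2 * (2 * c))%R; last by ring.
by rewrite -mulrA ler_pM2l// sqrt_le_div_sqrt.
Qed.

Lemma integral_abel_kernel_itv_far (b c s : R) :
  (0 < b)%R -> (b < c)%R -> (2 * c < s)%R ->
  \int[mu]_(u in `]b, c[) abel_kernel (s - u) <= (4 * c / Num.sqrt s)%:E.
Proof.
move=> b0 bc cs.
apply: (@le_trans _ _ (\int[mu]_(u in `]b, c[) (2 / Num.sqrt s)%R%:E)).
  apply: ge0_le_integral => //.
  - by move=> u _; exact: abel_kernel_ge0.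
  - apply: measurable_funTS; exact: measurable_abel_kernel_subr.
  - move=> u; rewrite /= in_itv/= => /andP[bu uc].
    apply: le_trans (abel_kernel_le _) _; rewrite lee_fin invsqrt_le2//; lra.
rewrite integral_cst//= lebesgue_measure_itv/= lte_fin bc -EFinM lee_fin.
have : (0 <= (Num.sqrt s)^-1)%R by rewrite invr_ge0 sqrtr_ge0.
set x := ((Num.sqrt s)^-1)%R; nra.
Qed.

Lemma integral_abel_kernel_itv_le (b c s : R) : (0 < b)%R -> (b < c)%R ->
  \int[mu]_(u in `]b, c[) abel_kernel (s - u) <=
  (\1_`]b, +oo[ s)%:E * (4 * c / Num.sqrt s)%:E.
Proof.
move=> b0 bc; rewrite indicE; have [bs|sb] := ltP b s.
  rewrite mem_set ?mul1e/=; last by rewrite in_itv/= bs.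
  have [sc|cs] := leP s (2 * c)%R.
    by apply: integral_abel_kernel_itv_near => //; rewrite sc andbT (lt_trans b0).
  exact: integral_abel_kernel_itv_far.
rewrite memNset ?mul0e/=; last by rewrite in_itv/= ltNge sb.
rewrite integral0_eq// => u; rewrite /= in_itv/= => /andP[bu _].
by rewrite abel_kernel_le0// subr_le0 (le_trans sb) ?ltW.
Qed.

End abel_kernel.

Section abel_transform.
Variables (R : realType) (rho : {measure set R -> \bar R}).
Hypothesis rho_invsqrt : forall b : R, (0 < b)%R ->
  \int[rho]_(s in `]b, +oo[) ((Num.sqrt s)^-1)%:E < +oo.
Local Notation mu := (@lebesgue_measure R).

Lemma measure_itvoc_lty [b N : R] :
  (0 < b)%R -> (0 < N)%R ->
  \int[rho]_(s in `]b, +oo[) ((Num.sqrt s)^-1)%:E < +oo -> rho `]b, N]%classic < +oo.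
Proof.
move=> b0 N0 rho_lty; have sN : (0 < Num.sqrt N)%R by rewrite sqrtr_gt0.
have mfin D : measurable_fun D (fun s : R => ((Num.sqrt s)^-1)%:E).
  by apply/measurable_EFinP/measurable_funTS; exact: measurable_invsqrt.
have : ((Num.sqrt N)^-1)%:E * rho `]b, N]%classic <=
    \int[rho]_(s in `]b, +oo[) ((Num.sqrt s)^-1)%:E.
  rewrite -integral_cst; last exact: measurable_itv.
  apply: (@le_trans _ _ (\int[rho]_(s in `]b, N]) ((Num.sqrt s)^-1)%:E)).
    apply: ge0_le_integral => //; first by move=> x _; rewrite lee_fin invr_ge0 sqrtr_ge0.
    move=> x; rewrite /= in_itv/= => /andP[bx xN].
    have x0 : (0 < x)%R := lt_trans b0 bx.
    by rewrite lee_fin lef_pV2 ?posrE ?sqrtr_gt0// ler_sqrt// ltW.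
  by apply: ge0_subset_integral => // x /=; rewrite !in_itv/= => /andP[->].
rewrite ltey; apply: contraTN => /eqP ->.
by rewrite gt0_muley ?lte_fin ?invr_gt0// leye_eq -ltey.
Qed.

Let mpos : measurable (`]0%R, +oo[%classic : set R) := measurable_itv _.

Lemma sigma_finite_restr_pos : sigma_finite setT (mrestr rho mpos).
Proof.
exists (fun n => `]-oo, 0%R]%classic `|` `](n.+1%:R^-1)%R, n.+1%:R]%classic).
  apply/seteqP; split => // x _; have [x0|x0] := leP x 0%R.
    by exists 0%N => //; left; rewrite /= in_itv/= x0.
  have /archi_boundP x_lt := ltW x0.
  have /archi_boundP xV_lt : (0 <= x^-1)%R by rewrite invr_ge0 ltW.
  exists (Num.Def.archi_bound x^-1 + Num.Def.archi_bound x)%N => //; right.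
  rewrite /= in_itv/=; apply/andP; split.
    rewrite -[x in (_ < x)%R]invrK ltf_pV2 ?posrE ?invr_gt0 ?ltr0n//.
    by apply: (lt_trans xV_lt); rewrite ltr_nat ltnS leq_addr.
  by apply: ltW (lt_le_trans x_lt _); rewrite ler_nat -addSn leq_addl.
move=> n; split; first by apply: measurableU; exact: measurable_itv.
have n_gt0 : (0 < n.+1%:R^-1 :> R)%R by rewrite invr_gt0 ltr0n.
apply: (@le_lt_trans _ _ (rho `](n.+1%:R^-1)%R, n.+1%:R]%classic)); last first.
  by apply: (measure_itvoc_lty n_gt0); [rewrite ltr0n|exact: rho_invsqrt].
rewrite /mrestr; apply: le_measure; rewrite ?inE.
- by apply: measurableI; [apply: measurableU|]; exact: measurable_itv.
- exact: measurable_itv.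
- move=> x [[|]]; rewrite /= !in_itv/= ?andbT // => x0 x0'.
  by move: (le_lt_trans x0 x0'); rewrite ltxx.
Qed.

Let rho_pos : {sigma_finite_measure set R -> \bar R} :=
  HB.pack (mrestr rho mpos)
    (Measure_isSigmaFinite.Build _ _ _ (mrestr rho mpos) sigma_finite_restr_pos).

Lemma Adens_restr_pos (u : R) : (0 < u)%R ->
  Adens rho u = \int[rho_pos]_s abel_kernel (s - u).
Proof.
move=> u0; transitivity (\int[rho]_(s in `]u, +oo[) abel_kernel (s - u)) => //.
rewrite -(integral_mrestr rho mpos); last first.
  by move=> s /=; rewrite !in_itv/= !andbT; exact: lt_trans.
apply: integral_eq_on_support => s /abel_kernel_neq0.
by rewrite subr_gt0 /= in_itv/= andbT.
Qed.

Lemma measurable_Adens : measurable_fun `](0%R : R), +oo[%classic (Adens rho).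
Proof.
apply: (@eq_measurable_fun _ _ _ _ _
  (fubini_F rho_pos (fun z : R * R => abel_kernel (z.2 - z.1)))).
  by move=> u; rewrite inE/= in_itv/= andbT => u0; rewrite Adens_restr_pos.
apply: measurable_funTS; apply: measurable_fun_fubini_tonelli_F.
  exact: measurable_abel_kernel_diff.
by move=> z; exact: abel_kernel_ge0.
Qed.

Lemma integral_Adens_itv_lty (b c : R) : (0 < b)%R -> (b < c)%R ->
  \int[mu]_(u in `]b, c[) Adens rho u < +oo.
Proof.
move=> b0 bc; have c0 := lt_trans b0 bc.
pose f (z : measurableTypeR R * R) := (\1_`]b, c[ z.1)%:E * abel_kernel (z.2 - z.1).
have mf : measurable_fun setT f.
  apply: emeasurable_funM; last exact: measurable_abel_kernel_diff.
  apply/measurable_EFinP; apply: measurableT_comp; last exact: measurable_fst.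
  by apply: measurable_indic; exact: measurable_itv.
have f_ge0 z : 0 <= f z by rewrite mule_ge0 ?lee_fin ?abel_kernel_ge0.
have -> : \int[mu]_(u in `]b, c[) Adens rho u = \int[mu]_u fubini_F rho_pos f u.
  rewrite -integral_indic_mul; apply: eq_integral => u _.
  rewrite /fubini_F /f /= ge0_integralZl_EFin//; last 2 first.
  - by move=> s _; exact: abel_kernel_ge0.
  - by apply: measurableT_comp measurable_abel_kernel _; exact: measurable_funB.
  rewrite /indic; case: (boolP (u \in _)) => [/set_mem|_]; rewrite /= ?mulr0n ?mul0e//.
  by rewrite /= in_itv/= => /andP[bu _]; rewrite Adens_restr_pos// (lt_trans b0).
rewrite /fubini_F (fubini_tonelli f)//.
apply: (@le_lt_trans _ _
    (\int[rho_pos]_s ((\1_`]b, +oo[ s)%:E * (4 * c / Num.sqrt s)%:E))).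
  apply: ge0_le_integral => //.
  - by move=> s _; apply: integral_ge0 => u _.
  - exact: (measurable_fun_fubini_tonelli_G (m1 := mu) f mf f_ge0).
  - apply: emeasurable_funM.
      by apply/measurable_EFinP/measurable_indic; exact: measurable_itv.
    by apply/measurable_EFinP/measurable_funM => //; exact: measurable_invsqrt.
  - by move=> s _; rewrite integral_indic_mul; exact: integral_abel_kernel_itv_le.
rewrite integral_indic_mul integral_mrestr; last first.
  by move=> s /=; rewrite !in_itv/= !andbT; exact: lt_trans.
under eq_integral do rewrite EFinM.
have c4_ge0 : (0 <= 4 * c)%R by rewrite mulr_ge0// ltW.
rewrite ge0_integralZl_EFin//; last first.
  by apply/measurable_EFinP/measurable_funTS; exact: measurable_invsqrt.
by apply: lte_mul_pinfty; rewrite ?lee_fin// rho_invsqrt.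
Qed.

End abel_transform.

Theorem lemma2p6 (R : realType) (rho : {measure set R -> \bar R}) :
  (forall b : R, (0 < b)%R ->
     \int[rho]_(s in `]b, +oo[%classic) ((Num.sqrt s)^-1)%:E < +oo) ->
  A_definable rho.
Proof.
move=> rho_invsqrt; split; first exact: measurable_Adens.
by move=> b c b0 bc; exact: integral_Adens_itv_lty.
Qed.
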